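(* Let $R$ be a finite local commutative ring, $K\le R^\times$ a pure group, and $\mathcal C=\mathrm{Cyc}(K,R)$. Let $I_0=\{x\in\mathrm{rad}(R): x\,\mathrm{rad}(R)=\{0\}\}$, $U_0=K\cap(1+I_0)$, and let $E_0$ be the equivalence relation on $R$ whose classes are the cosets of $I_0$. Then $\mathcal C_{E_0}\ge\mathrm{Cyc}(U_0,R)$.
   Context: All rings have an identity; $\mathrm{rad}(R)$ is the unique maximal ideal of the local ring $R$. A scheme (coherent configuration) on a finite set $V$ is a pair $(V,\mathcal R)$ where $\mathcal R$ is a partition of $V\times V$ into nonempty relations, closed under transposition, such that the diagonal $\Delta(V)$ is a union of members of $\mathcal R$, and for $R_1,R_2,T\in\mathcal R$ the number $|\{y:(x,y)\in R_1,(y,z)\in R_2\}|$ is the same for all $(x,z)\in T$. Elements of $\mathcal R$ are basis relations; unions of them are relations ($\mathcal R^*$). For schemes on $V$, $\mathcal C\le\mathcal C'$ means every relation of $\mathcal C$ is a relation of $\mathcal C'$. For an equivalence relation $E$ on $V$, $\mathcal C_E$ is the smallest scheme on $V$ that is $\ge\mathcal C$ and has $\Delta(X)=\{(x,x):x\in X\}$ as a relation for every class $X$ of $E$. For $K\le R^\times$, $\mathrm{Cyc}(K,R)$ is the scheme on $R$ whose basis relations are $\{(x,y): y-x\in rK\}$, $r\in R$. A group $K\le R^\times$ is pure if the only ideal $I$ of $R$ with $1+I\subseteq K$ is $I=\{0\}$. *)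

From HB Require Import structures.
From mathcomp Require Import all_boot all_order all_algebra all_fingroup.
Set Implicit Arguments. Unset Strict Implicit. Unset Printing Implicit Defensive.
Import GRing.Theory.
Local Open Scope ring_scope.

Section Schemes.
Variable V : finType.

Definition diag_on (X : {set V}) : {set V * V} := [set (x, x) | x in X].

Definition transp (S : {set V * V}) : {set V * V} := [set p | (p.2, p.1) \in S].

Definition is_relation (P : {set {set V * V}}) (S : {set V * V}) : Prop :=
  exists2 Q : {set {set V * V}}, Q \subset P & S = cover Q.

Definition is_scheme (P : {set {set V * V}}) : Prop :=
  [/\ partition P [set: V * V],
      (forall S, S \in P -> transp S \in P),
      is_relation P (diag_on [set: V]) &
      (forall R1 R2 T, R1 \in P -> R2 \in P -> T \in P ->
        forall x z x' z', (x, z) \in T -> (x', z') \in T ->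
          #|[set y | ((x, y) \in R1) && ((y, z) \in R2)]| =
          #|[set y | ((x', y) \in R1) && ((y, z') \in R2)]|)].

Definition scheme_le (C C' : {set {set V * V}}) : Prop :=
  forall S, is_relation C S -> is_relation C' S.

Definition ext_by_classes (C : {set {set V * V}}) (E : rel V)
  (C' : {set {set V * V}}) : Prop :=
  [/\ is_scheme C', scheme_le C C' &
      forall x : V, is_relation C' (diag_on [set y | E x y])].

(* C_E >= D, where C_E is the smallest scheme in ext_by_classes C E:
   equivalently, D <= C' for every scheme C' in ext_by_classes C E. *)
Definition CE_ge (C : {set {set V * V}}) (E : rel V) (D : {set {set V * V}}) : Prop :=
  forall C', ext_by_classes C E C' -> scheme_le D C'.

End Schemes.

Section Rings.
Variable R : finComUnitRingType.

Definition is_ideal (I : {set R}) : Prop :=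
  [/\ 0 \in I, (forall x y, x \in I -> y \in I -> x + y \in I) &
      (forall r x, x \in I -> r * x \in I)].

Definition is_maximal_ideal (M : {set R}) : Prop :=
  [/\ is_ideal M, M != [set: R] &
      forall J, is_ideal J -> M \subset J -> J = M \/ J = [set: R]].

Definition pure (K : {set {unit R}}) : Prop :=
  forall I : {set R}, is_ideal I ->
    (forall x, x \in I -> exists2 u, u \in K & val u = 1 + x) -> I = [set 0].

Definition cyc (K : {set {unit R}}) : {set {set R * R}} :=
  [set [set p : R * R | p.2 - p.1 \in [set r * val k | k in K]] | r : R].

Definition I0 (M : {set R}) : {set R} :=
  [set x in M | [forall m in M, x * m == 0]].

Definition U0 (K : {set {unit R}}) (M : {set R}) : {set {unit R}} :=
  [set u in K | val u - 1 \in I0 M].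

Definition E0 (M : {set R}) : rel R := fun x y => y - x \in I0 M.

End Rings.

(* Let P be a scheme above Cyc(K,R) in which every Delta(x + I_0) is a
   relation. Regularity of P along the paths x -> x -> y and x -> y -> y shows
   that two pairs (x,y), (x',y') in a common basis relation of P have
   endpoints congruent mod I_0, so d = y - x and d' = y' - x' agree mod I_0;
   as Cyc(K,R) <= P, they also lie in the same set rK. For a unit r this
   already puts d' in rU_0. For r in rad(R) we have rU_0 = {r}; writing
   d' = r + e and splitting r = u + (r - u) with u a unit, regularity along
   x -> x + u -> y shows that se lies in U_0 - 1 for every s, so the ideal
   generated by e lies in U_0 - 1 and purity of K forces e = 0. *)

From mathcomp Require Import all_boot all_order all_algebra all_fingroup.
From mathcomp Require Import ring.
Set Implicit Arguments. Unset Strict Implicit. Unset Printing Implicit Defensive.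
Import GRing.Theory.
Local Open Scope ring_scope.

Section SchemeFacts.
Variable V : finType.
Implicit Types (P D : {set {set V * V}}) (S B T : {set V * V}).

Lemma partition_basis_mem P p :
  partition P [set: V * V] -> exists2 B, B \in P & p \in B.
Proof.
case/and3P=> /eqP coverP _ _.
have : p \in cover P by rewrite coverP inE.
by case/bigcupP=> B PB pB; exists B.
Qed.

Lemma is_relation_setT P : partition P [set: V * V] -> is_relation P [set: V * V].
Proof. by case/and3P=> /eqP coverP _ _; exists P. Qed.

Lemma is_relation_basis P B : B \in P -> is_relation P B.
Proof. by move=> PB; exists [set B]; rewrite ?sub1set ?cover1. Qed.

Lemma is_relation_basis_sub P S B p : partition P [set: V * V] ->
  is_relation P S -> B \in P -> p \in B -> p \in S -> B \subset S.
Proof.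
case/and3P=> _ /trivIsetP trivP _ [Q QP ->] PB pB /bigcupP[B' QB' pB'].
have [->|neqB] := eqVneq B B'; first exact: bigcup_sup.
have := trivP B B' PB (subsetP QP _ QB') neqB.
by move/disjoint_setI0/setP/(_ p); rewrite !inE pB pB'.
Qed.

Lemma is_relation_closed P S : partition P [set: V * V] ->
  (forall B, B \in P -> forall p q, p \in B -> q \in B -> p \in S -> q \in S) ->
  is_relation P S.
Proof.
move=> partP closedS; exists [set B in P | B \subset S].
  by apply/subsetP=> B; rewrite inE => /andP[].
apply/setP=> p; apply/idP/bigcupP=> [pS | [B]]; last first.
  by rewrite inE => /andP[_ /subsetP]; apply.
have [B PB pB] := partition_basis_mem p partP.
by exists B; rewrite // inE PB; apply/subsetP=> q qB; apply: closedS pB qB pS.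
Qed.

Lemma scheme_le_of_basis D P : partition P [set: V * V] ->
  (forall T, T \in D -> is_relation P T) -> scheme_le D P.
Proof.
move=> partP relD _ [Q QD ->]; apply: is_relation_closed => // B PB p q pB qB.
case/bigcupP=> T QT pT; apply/bigcupP; exists T => //.
by apply: (subsetP (is_relation_basis_sub partP (relD T (subsetP QD T QT)) PB pB pT)).
Qed.

(* The number of such [w'] is an intersection number of [P], hence the same
   for [(x, z)] and [(x', z')]. *)
Lemma scheme_path_transfer P A1 A2 B x z x' z' w : is_scheme P ->
  is_relation P A1 -> is_relation P A2 -> B \in P ->
  (x, z) \in B -> (x', z') \in B -> (x, w) \in A1 -> (w, z) \in A2 ->
  exists w', (x', w') \in A1 /\ (w', z') \in A2.
Proof.
case=> partP _ _ regP relA1 relA2 PB xzB xzB' xwA1 wzA2.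
have [R1 PR1 xwR1] := partition_basis_mem (x, w) partP.
have [R2 PR2 wzR2] := partition_basis_mem (w, z) partP.
have /subsetP subA1 := is_relation_basis_sub partP relA1 PR1 xwR1 xwA1.
have /subsetP subA2 := is_relation_basis_sub partP relA2 PR2 wzR2 wzA2.
have : (0 < #|[set y | ((x', y) \in R1) && ((y, z') \in R2)]|)%N.
  rewrite -(regP R1 R2 B PR1 PR2 PB x z x' z' xzB xzB') card_gt0.
  by apply/set0Pn; exists w; rewrite inE xwR1 wzR2.
case/card_gt0P=> w'; rewrite inE => /andP[x'w' w'z'].
by exists w'; split; [apply: subA1 | apply: subA2].
Qed.

Lemma scheme_basis_classes P (E : rel V) B x y x' y' : is_scheme P ->
  reflexive E -> (forall v, is_relation P (diag_on [set u | E v u])) ->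
  B \in P -> (x, y) \in B -> (x', y') \in B -> E x x' /\ E y y'.
Proof.
move=> schP reflE relE PB xyB xyB'; have partP : partition P [set: V * V].
  by case: schP.
have diagE v : (v, v) \in diag_on [set u | E v u] by apply: imset_f; rewrite inE.
have [w [/imsetP[u + [-> _]] _]] := scheme_path_transfer schP (relE x)
  (is_relation_setT partP) PB xyB xyB' (diagE x) (in_setT (x, y)).
rewrite inE; split=> //.
have [w' [_ /imsetP[u' + [_ ->]]]] := scheme_path_transfer schP
  (is_relation_setT partP) (relE y) PB xyB xyB' (in_setT (x, y)) (diagE y).
by rewrite inE.
Qed.

End SchemeFacts.

Section Ideals.
Variable R : finComUnitRingType.
Implicit Types (I J A : {set R}) (U : {set {unit R}}).

Section IdealTheory.
Variable I : {set R}.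
Hypothesis idealI : is_ideal I.

Lemma ideal0 : 0 \in I.
Proof. by case: idealI. Qed.

Lemma idealD x y : x \in I -> y \in I -> x + y \in I.
Proof. by case: idealI => _ + _; apply. Qed.

Lemma idealMl r x : x \in I -> r * x \in I.
Proof. by case: idealI => _ _; apply. Qed.

Lemma idealN x : x \in I -> - x \in I.
Proof. by rewrite -mulN1r; apply: idealMl. Qed.

Lemma idealB x y : x \in I -> y \in I -> x - y \in I.
Proof. by move=> Ix /idealN; apply: idealD. Qed.

Lemma ideal_eqT : 1 \in I -> I = [set: R].
Proof. by move=> I1; apply/setP=> x; rewrite inE -[x]mulr1 idealMl. Qed.

End IdealTheory.

Definition idealb I :=
  [&& 0 \in I, [forall x in I, forall y in I, x + y \in I] &
      [forall r, forall x in I, r * x \in I]].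

Lemma idealbP I : reflect (is_ideal I) (idealb I).
Proof.
apply: (iffP and3P) => [[I0 /forall_inP addI /forallP mulI] | [I0 addI mulI]].
  split=> // [x y Ix | r x]; first exact: (forall_inP (addI x Ix)).
  exact: (forall_inP (mulI r)).
split=> //; first by apply/forall_inP=> x Ix; apply/forall_inP=> y; apply: addI.
by apply/forallP=> r; apply/forall_inP=> x; apply: mulI.
Qed.

Lemma proper_ideal_sub_maximal I : is_ideal I -> 1 \notin I ->
  exists2 J, is_maximal_ideal J & I \subset J.
Proof.
move=> idealI I1.
pose proper J := [&& idealb J, I \subset J & 1 \notin J].
have properI : proper I by rewrite /proper subxx I1 !andbT; apply/idealbP.
case: (arg_maxnP (fun J => #|J|) properI) => J /and3P[/idealbP idealJ IJ J1] maxJ.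
exists J => //; split=> //; first by apply: contraNneq J1 => ->; rewrite inE.
move=> J' idealJ' JJ'; have [J'1 | J'1] := boolP (1 \in J').
  by right; apply: ideal_eqT.
left; apply/eqP; rewrite eq_sym eqEcard JJ' /=; apply: maxJ.
by rewrite /proper J'1 (subset_trans IJ JJ') !andbT; apply/idealbP.
Qed.

Lemma principal_ideal x : is_ideal [set r * x | r : R].
Proof.
split=> [|_ _ /imsetP[r _ ->] /imsetP[s _ ->] | t _ /imsetP[r _ ->]].
- by apply/imsetP; exists 0; rewrite ?mul0r.
- by apply/imsetP; exists (r + s); rewrite ?mulrDl.
- by apply/imsetP; exists (t * r); rewrite ?mulrA.
Qed.

Definition ideal_core A : {set R} := [set e | [forall s, s * e \in A]].

Lemma ideal_core_sub A : ideal_core A \subset A.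
Proof. by apply/subsetP=> e; rewrite inE => /forallP/(_ 1); rewrite mul1r. Qed.

Lemma ideal_core_ideal A : 0 \in A -> {in A &, forall x y, x + y \in A} ->
  is_ideal (ideal_core A).
Proof.
move=> A0 addA; split=> [|x y | r x]; rewrite !inE.
- by apply/forallP=> s; rewrite mulr0.
- by move=> /forallP Ax /forallP Ay; apply/forallP=> s; rewrite mulrDr addA.
- by move=> /forallP Ax; apply/forallP=> s; rewrite mulrA.
Qed.

Definition unit_shift U : {set R} := [set z | [exists u in U, val u == 1 + z]].

Lemma unit_shiftP U z :
  reflect (exists2 u, u \in U & val u = 1 + z) (z \in unit_shift U).
Proof. by rewrite inE; apply: (iffP exists_inP) => -[u Uu /eqP]; exists u. Qed.

Lemma mem_unit_shift U u : u \in U -> val u - 1 \in unit_shift U.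
Proof. by move=> Uu; apply/unit_shiftP; exists u; rewrite // addrC subrK. Qed.

Lemma unit_shiftS U U' : U \subset U' -> unit_shift U \subset unit_shift U'.
Proof.
move=> /subsetP UU'; apply/subsetP=> z /unit_shiftP[u Uu uz].
by apply/unit_shiftP; exists u; rewrite ?UU'.
Qed.

Lemma pure_ideal_core U A : pure U -> A \subset unit_shift U ->
  0 \in A -> {in A &, forall x y, x + y \in A} -> ideal_core A = [set 0].
Proof.
move=> pureU /subsetP AU A0 addA; apply: pureU; first exact: ideal_core_ideal.
by move=> x /(subsetP (ideal_core_sub A))/AU/unit_shiftP.
Qed.

End Ideals.

Section LocalRing.
Variable R : finComUnitRingType.
Variable M : {set R}.
Hypothesis localM : forall J : {set R}, is_maximal_ideal J <-> J = M.

Lemma rad_ideal : is_ideal M.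
Proof. by case: ((localM M).2 erefl). Qed.

Lemma one_notin_rad : 1 \notin M.
Proof.
case: ((localM M).2 erefl) => idealM neqT _.
by apply: contra_neqN neqT; apply: ideal_eqT.
Qed.

Lemma unit_notin_rad u : u \is a GRing.unit -> u \notin M.
Proof.
move=> Uu; apply: contraNN one_notin_rad => Mu.
by rewrite -(mulVr Uu) (idealMl rad_ideal).
Qed.

Lemma nonunit_in_rad x : x \isn't a GRing.unit -> x \in M.
Proof.
move=> Ux; have notin1 : 1 \notin [set r * x | r : R].
  apply: contra Ux => /imsetP[r _ rx1]; apply/unitrPr.
  by exists r; rewrite mulrC.
have [J /localM -> /subsetP] := proper_ideal_sub_maximal (principal_ideal x) notin1.
by apply; apply/imsetP; exists 1; rewrite ?mul1r.
Qed.

Lemma rad_subr_unit r u : r \in M -> u \is a GRing.unit -> r - u \is a GRing.unit.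
Proof.
move=> Mr Uu; apply: contraR (unit_notin_rad Uu) => /nonunit_in_rad Mru.
by rewrite -(subKr r u) (idealB rad_ideal).
Qed.

Lemma I0_sub_rad x : x \in I0 M -> x \in M.
Proof. by rewrite inE => /andP[]. Qed.

Lemma I0_mul_rad x m : x \in I0 M -> m \in M -> x * m = 0.
Proof. by rewrite inE => /andP[_ /forall_inP I0x] /I0x/eqP. Qed.

Lemma rad_mul_I0 m x : m \in M -> x \in I0 M -> m * x = 0.
Proof. by rewrite mulrC => Mm I0x; apply: I0_mul_rad. Qed.

Lemma I0_ideal : is_ideal (I0 M).
Proof.
split=> [|x y I0x I0y | r x I0x]; rewrite inE.
- by rewrite (ideal0 rad_ideal); apply/forall_inP=> m _; rewrite mul0r.
- rewrite (idealD rad_ideal) ?I0_sub_rad //; apply/forall_inP=> m Mm.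
  by rewrite mulrDl !(I0_mul_rad _ Mm) ?addr0.
- rewrite (idealMl rad_ideal) ?I0_sub_rad //; apply/forall_inP=> m Mm.
  by rewrite -mulrA (I0_mul_rad I0x Mm) mulr0.
Qed.

Variable K : {group {unit R}}.
Hypothesis pureK : pure K.

Lemma U0_sub : U0 K M \subset K.
Proof. by apply/subsetP=> u; rewrite inE => /andP[]. Qed.

Lemma one_in_U0 : 1%g \in U0 K M.
Proof. by rewrite inE group1 subrr (ideal0 I0_ideal). Qed.

Lemma unit_shift_U0_sub_I0 : unit_shift (U0 K M) \subset I0 M.
Proof.
apply/subsetP=> z /unit_shiftP[u]; rewrite inE => /andP[_ I0u] uz.
by move: I0u; rewrite uz addrC addKr.
Qed.

(* [1 + z] is inverted by [1 - z] since [z ^+ 2 = 0]. *)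
Lemma unit_shift_U0B :
  {in unit_shift (U0 K M) &, forall i j, i - j \in unit_shift (U0 K M)}.
Proof.
move=> i j Si Sj.
have /subsetP I0S := unit_shift_U0_sub_I0.
have [I0i I0j] := (I0S i Si, I0S j Sj).
case/unit_shiftP: Si => a; rewrite inE => /andP[Ka _] ai.
case/unit_shiftP: Sj => b; rewrite inE => /andP[Kb _] bj.
have ij0 : i * j = 0 by rewrite I0_mul_rad ?I0_sub_rad.
have jj0 : j * j = 0 by rewrite I0_mul_rad ?I0_sub_rad.
have inv_b : val b * (1 - j) = 1.
  by rewrite bj mulrDl mul1r mulrBr mulr1 jj0 subr0 subrK.
have val_ab : val (a * b^-1)%g = 1 + (i - j).
  rewrite FinRing.val_unitM FinRing.val_unitV (mulr1_eq inv_b) ai.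
  by rewrite mulrBr mulr1 mulrDl mul1r ij0 addr0 addrA.
apply/unit_shiftP; exists (a * b^-1)%g => //.
by rewrite inE groupM ?groupV // val_ab addrC addKr (idealB I0_ideal).
Qed.

Lemma unit_shift_U0_0 : 0 \in unit_shift (U0 K M).
Proof. by rewrite -(subrr (val (1%g : {unit R}))) mem_unit_shift ?one_in_U0. Qed.

Lemma unit_shift_U0D :
  {in unit_shift (U0 K M) &, forall i j, i + j \in unit_shift (U0 K M)}.
Proof.
move=> i j Si Sj; rewrite -[j]opprK -[- j]add0r.
by rewrite !unit_shift_U0B ?unit_shift_U0_0.
Qed.

Lemma ideal_core_U0 : ideal_core (unit_shift (U0 K M)) = [set 0].
Proof.
apply: pure_ideal_core pureK _ unit_shift_U0_0 unit_shift_U0D.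
exact: unit_shiftS U0_sub.
Qed.

Lemma mul_U0_rad r a : r \in M -> a \in U0 K M -> r * val a = r.
Proof.
move=> Mr; rewrite inE => /andP[_ I0a]; apply/eqP.
by rewrite -subr_eq0 -{2}[r]mulr1 -mulrBr rad_mul_I0.
Qed.

Lemma U0_of_unit_mul r a k : r \is a GRing.unit -> a \in U0 K M -> k \in K ->
  r * val k - r * val a \in I0 M -> k \in U0 K M.
Proof.
move=> Ur; rewrite inE => /andP[_ I0a] Kk I0rka; rewrite inE Kk /=.
have -> : val k - 1 = r^-1 * (r * val k - r * val a) + (val a - 1).
  by rewrite -mulrBr mulKr // addrA subrK.
by rewrite (idealD I0_ideal) ?(idealMl I0_ideal).
Qed.

Definition cyc_rel (U : {set {unit R}}) (r : R) : {set R * R} :=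
  [set p : R * R | p.2 - p.1 \in [set r * val k | k in U]].

Lemma in_cyc_rel U r x y :
  ((x, y) \in cyc_rel U r) = (y - x \in [set r * val k | k in U]).
Proof. by rewrite inE. Qed.

Section Extension.
Variable P : {set {set R * R}}.
Hypothesis schP : is_scheme P.
Hypothesis leP : scheme_le (cyc K) P.
Hypothesis classesP : forall x, is_relation P (diag_on [set y | E0 M x y]).

Let partP : partition P [set: R * R].
Proof. by case: schP. Qed.

Lemma cyc_rel_K_closed r B x y x' y' :
  B \in P -> (x, y) \in B -> (x', y') \in B ->
  (x, y) \in cyc_rel K r -> (x', y') \in cyc_rel K r.
Proof.
move=> PB xyB xyB' xyr; have relK : is_relation P (cyc_rel K r).
  by apply/leP/is_relation_basis/imset_f.
exact: subsetP (is_relation_basis_sub partP relK PB xyB xyr) _ xyB'.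
Qed.

Lemma basis_diff_I0 B x y x' y' : B \in P -> (x, y) \in B -> (x', y') \in B ->
  (y' - x') - (y - x) \in I0 M.
Proof.
move=> PB xyB xyB'; have reflE0 : reflexive (E0 M).
  by move=> v; rewrite /E0 subrr (ideal0 I0_ideal).
have [I0x I0y] := scheme_basis_classes schP reflE0 classesP PB xyB xyB'.
have -> : y' - x' - (y - x) = (y' - y) - (x' - x) by ring.
exact: (idealB I0_ideal I0y I0x).
Qed.

Lemma cyc_rel_U0_unit_closed r B x y x' y' : r \is a GRing.unit -> B \in P ->
  (x, y) \in B -> (x', y') \in B ->
  (x, y) \in cyc_rel (U0 K M) r -> (x', y') \in cyc_rel (U0 K M) r.
Proof.
move=> Ur PB xyB xyB' xyU0; have xyK : (x, y) \in cyc_rel K r.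
  move: xyU0; rewrite !in_cyc_rel => /imsetP[a /(subsetP U0_sub) Ka ->].
  exact: imset_f.
move: xyU0 (cyc_rel_K_closed PB xyB xyB' xyK) (basis_diff_I0 PB xyB xyB').
rewrite !in_cyc_rel => /imsetP[a U0a ->] /imsetP[k Kk ->] I0rka.
by apply/imsetP; exists k; rewrite // (U0_of_unit_mul Ur U0a).
Qed.

Lemma cyc_rel_U0_unit_is_relation u : u \is a GRing.unit ->
  is_relation P (cyc_rel (U0 K M) u).
Proof.
move=> Uu; apply: is_relation_closed partP _ => B PB [x y] [x' y'].
exact: cyc_rel_U0_unit_closed.
Qed.

(* Split [r = u + (r - u)] with [u] a unit: both summands are units, so the
   relations [cyc_rel (U0 K M) u] and [cyc_rel (U0 K M) (r - u)] belong to [P]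
   and regularity of [P] transports the path [x -> x + u -> y] to [x' -> y']. *)
Lemma basis_rad_shift r B x y x' y' : r \in M -> B \in P ->
  (x, y) \in B -> (x', y') \in B -> y - x = r ->
  y' - x' - r \in ideal_core (unit_shift (U0 K M)).
Proof.
move=> Mr PB xyB xyB' xyr; set e := y' - x' - r.
have I0e : e \in I0 M by rewrite /e -xyr (basis_diff_I0 PB xyB xyB').
rewrite inE; apply/forallP=> s.
have [Us | /nonunit_in_rad Ms] := boolP (s \is a GRing.unit); last first.
  by rewrite rad_mul_I0 // unit_shift_U0_0.
pose u := s^-1; have Uu : u \is a GRing.unit by rewrite unitrV.
have xu : (x, x + u) \in cyc_rel (U0 K M) u.
  rewrite in_cyc_rel; apply/imsetP; exists 1%g; rewrite ?one_in_U0 //=.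
  by rewrite addrAC subrr add0r mulr1.
have uy : (x + u, y) \in cyc_rel (U0 K M) (r - u).
  rewrite in_cyc_rel; apply/imsetP; exists 1%g; rewrite ?one_in_U0 //=.
  by rewrite mulr1 opprD addrA xyr.
have [w [x'w wy']] := scheme_path_transfer schP (cyc_rel_U0_unit_is_relation Uu)
  (cyc_rel_U0_unit_is_relation (rad_subr_unit Mr Uu)) PB xyB xyB' xu uy.
move: x'w wy'; rewrite !in_cyc_rel => /imsetP[a U0a x'wa] /imsetP[b U0b wy'b].
have y'E : y' = x' + u * val a + (r - u) * val b by rewrite -x'wa -wy'b; ring.
have -> : s * e = s * u * ((val a - 1) - (val b - 1)) + s * (r * val b - r).
  by rewrite /e y'E; ring.
rewrite mul_U0_rad // subrr mulr0 addr0 mulrV // mul1r.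
by rewrite unit_shift_U0B ?mem_unit_shift.
Qed.

Lemma cyc_rel_U0_rad_closed r B x y x' y' : r \in M -> B \in P ->
  (x, y) \in B -> (x', y') \in B ->
  (x, y) \in cyc_rel (U0 K M) r -> (x', y') \in cyc_rel (U0 K M) r.
Proof.
move=> Mr PB xyB xyB'; rewrite !in_cyc_rel => /imsetP[a U0a].
rewrite mul_U0_rad // => xyr.
have := basis_rad_shift Mr PB xyB xyB' xyr.
rewrite ideal_core_U0 inE subr_eq0 => /eqP ->.
by apply/imsetP; exists 1%g; rewrite ?one_in_U0 //= mulr1.
Qed.

Lemma cyc_rel_U0_is_relation r : is_relation P (cyc_rel (U0 K M) r).
Proof.
apply: is_relation_closed partP _ => B PB [x y] [x' y'].
have [Ur | /nonunit_in_rad Mr] := boolP (r \is a GRing.unit).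
  exact: cyc_rel_U0_unit_closed.
exact: cyc_rel_U0_rad_closed.
Qed.

End Extension.
End LocalRing.

Theorem theorem2p5 (R : finComUnitRingType) (M : {set R})
  (Hlocal : forall J : {set R}, is_maximal_ideal J <-> J = M)
  (K : {group {unit R}}) (Hpure : pure K) :
  CE_ge (cyc K) (E0 M) (cyc (U0 K M)).
Proof.
move=> P [schP leP classesP]; apply: scheme_le_of_basis; first by case: schP.
move=> _ /imsetP[r _ ->].
exact: (cyc_rel_U0_is_relation Hlocal Hpure schP leP classesP).
Qed.
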